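(* Let $(E,\tau)$ be a locally solid vector lattice. Suppose that there exists a metrisable (Hausdorff) linear topology $\tau^\ast$ on $E$ that is coarser than $\tau$. Then there exists a metrisable locally solid topology $\widetilde\tau$ on $E$ that is coarser than $\tau$ and finer than $\tau^\ast$. If $\tau$ is an o-Lebesgue topology (resp. a uo-Lebesgue topology), then any such $\widetilde\tau$ is an o-Lebesgue topology (resp. a uo-Lebesgue topology). If $\tau$ is a Fatou topology, then $\widetilde\tau$ can be chosen to be a Fatou topology.
   Context: All vector lattices are real and Archimedean; linear topologies are Hausdorff. A locally solid topology on a vector lattice $E$ is a linear topology such that zero has a neighbourhood basis of solid sets. A net $(x_\alpha)$ in $E$ order converges to $x$ if there is a net $(y_\beta)$ with $y_\beta\downarrow 0$ such that for every $\beta_0$ there is $\alpha_0$ with $|x_\alpha-x|\leq y_{\beta_0}$ for all $\alpha\geq\alpha_0$. It uo-converges to $x$ if $|x_\alpha-x|\wedge|y|$ order converges to $0$ for every $y\in E$. A subset $S$ is order closed if it contains all order limits of nets in $S$. A locally solid topology $\tau$ is an o-Lebesgue topology (resp. uo-Lebesgue topology) if every net that order converges (resp. uo-converges) to $x$ also $\tau$-converges to $x$; it is a Fatou topology if zero has a neighbourhood basis of order closed solid sets. *)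

From HB Require Import structures.
From mathcomp Require Import all_boot all_order all_algebra.
From mathcomp Require Import reals.
Set Implicit Arguments. Unset Strict Implicit. Unset Printing Implicit Defensive.
Import Order.TTheory GRing.Theory Num.Theory.
Local Open Scope ring_scope.

Section VL.
Variables (R : realType) (E : lmodType R).

Definition is_vector_lattice (le : E -> E -> Prop) (sup : E -> E -> E) : Prop :=
  (forall x, le x x) /\
  (forall x y, le x y -> le y x -> x = y) /\
  (forall x y z, le x y -> le y z -> le x z) /\
  (forall x y z, le x y -> le (x + z) (y + z)) /\
  (forall (a : R) x y, 0 <= a -> le x y -> le (a *: x) (a *: y)) /\
  (forall x y, le x (sup x y) /\ le y (sup x y) /\
               forall z, le x z -> le y z -> le (sup x y) z) /\
  (* Archimedean *)
  (forall x y, le 0 x -> (forall n : nat, le (x *+ n) y) -> x = 0).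

Definition vinf (sup : E -> E -> E) (x y : E) : E := - sup (- x) (- y).
Definition vabs (sup : E -> E -> E) (x : E) : E := sup x (- x).

Definition directed (I : Type) (leI : I -> I -> Prop) : Prop :=
  [/\ (forall i, leI i i),
      (forall i j k, leI i j -> leI j k -> leI i k),
      (exists i : I, True) &
      (forall i j, exists k, leI i k /\ leI j k)].

Definition decr_to_zero (le : E -> E -> Prop) (J : Type) (leJ : J -> J -> Prop)
  (y : J -> E) : Prop :=
  (forall b1 b2, leJ b1 b2 -> le (y b2) (y b1)) /\
  (forall b, le 0 (y b)) /\
  (forall z, (forall b, le z (y b)) -> le z 0).

Definition order_conv (le : E -> E -> Prop) (sup : E -> E -> E)
  (I : Type) (leI : I -> I -> Prop) (x : I -> E) (x0 : E) : Prop :=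
  exists (J : Type) (leJ : J -> J -> Prop) (y : J -> E),
    directed leJ /\ decr_to_zero le leJ y /\
    forall b0, exists a0, forall a, leI a0 a -> le (vabs sup (x a - x0)) (y b0).

Definition uo_conv (le : E -> E -> Prop) (sup : E -> E -> E)
  (I : Type) (leI : I -> I -> Prop) (x : I -> E) (x0 : E) : Prop :=
  forall y : E,
    order_conv le sup leI (fun a => vinf sup (vabs sup (x a - x0)) (vabs sup y)) 0.

Definition order_closed (le : E -> E -> Prop) (sup : E -> E -> E) (S : E -> Prop) :=
  forall (I : Type) (leI : I -> I -> Prop) (x : I -> E) (x0 : E),
    directed leI -> (forall a, S (x a)) -> order_conv le sup leI x x0 -> S x0.

Definition solid (le : E -> E -> Prop) (sup : E -> E -> E) (S : E -> Prop) :=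
  forall x y, S y -> le (vabs sup x) (vabs sup y) -> S x.

Definition is_topology (tau : (E -> Prop) -> Prop) : Prop :=
  [/\ tau (fun _ => True),
      tau (fun _ => False),
      (forall U V, tau U -> tau V -> tau (fun x => U x /\ V x)) &
      (forall F : (E -> Prop) -> Prop, (forall U, F U -> tau U) ->
          tau (fun x => exists U, F U /\ U x))].

Definition nbhd (tau : (E -> Prop) -> Prop) (x : E) (U : E -> Prop) : Prop :=
  exists O, tau O /\ O x /\ forall z, O z -> U z.

Definition hausdorff (tau : (E -> Prop) -> Prop) : Prop :=
  forall x y, x <> y -> exists U V, nbhd tau x U /\ nbhd tau y V /\
                                    forall z, ~ (U z /\ V z).

Definition add_continuous (tau : (E -> Prop) -> Prop) : Prop :=
  forall x0 y0 U, nbhd tau (x0 + y0) U ->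
    exists V W, nbhd tau x0 V /\ nbhd tau y0 W /\
                forall x y, V x -> W y -> U (x + y).

Definition scale_continuous (tau : (E -> Prop) -> Prop) : Prop :=
  forall (a0 : R) x0 U, nbhd tau (a0 *: x0) U ->
    exists (e : R) V, 0 < e /\ nbhd tau x0 V /\
                forall a x, `|a - a0| < e -> V x -> U (a *: x).

Definition linear_topology (tau : (E -> Prop) -> Prop) : Prop :=
  [/\ is_topology tau, hausdorff tau, add_continuous tau & scale_continuous tau].

Definition locally_solid (le : E -> E -> Prop) (sup : E -> E -> E)
  (tau : (E -> Prop) -> Prop) : Prop :=
  linear_topology tau /\
  forall U, nbhd tau 0 U -> exists V, nbhd tau 0 V /\ solid le sup V /\
                                      forall z, V z -> U z.

Definition metrisable (tau : (E -> Prop) -> Prop) : Prop :=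
  exists d : E -> E -> R,
    [/\ (forall x y, 0 <= d x y),
        (forall x y, d x y = 0 <-> x = y),
        (forall x y, d x y = d y x),
        (forall x y z, d x z <= d x y + d y z) &
        (forall O, tau O <-> forall x, O x ->
            exists r : R, 0 < r /\ forall y, d x y < r -> O y)].

Definition coarser (tau1 tau2 : (E -> Prop) -> Prop) : Prop :=
  forall O, tau1 O -> tau2 O.

Definition tconv (tau : (E -> Prop) -> Prop) (I : Type) (leI : I -> I -> Prop)
  (x : I -> E) (x0 : E) : Prop :=
  forall U, nbhd tau x0 U -> exists a0, forall a, leI a0 a -> U (x a).

Definition o_lebesgue le sup (tau : (E -> Prop) -> Prop) : Prop :=
  locally_solid le sup tau /\
  forall (I : Type) (leI : I -> I -> Prop) (x : I -> E) (x0 : E),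
    directed leI -> order_conv le sup leI x x0 -> tconv tau leI x x0.

Definition uo_lebesgue le sup (tau : (E -> Prop) -> Prop) : Prop :=
  locally_solid le sup tau /\
  forall (I : Type) (leI : I -> I -> Prop) (x : I -> E) (x0 : E),
    directed leI -> uo_conv le sup leI x x0 -> tconv tau leI x x0.

Definition fatou le sup (tau : (E -> Prop) -> Prop) : Prop :=
  locally_solid le sup tau /\
  forall U, nbhd tau 0 U -> exists V, nbhd tau 0 V /\ solid le sup V /\
                  order_closed le sup V /\ forall z, V z -> U z.

End VL.

(* Choose solid tau-neighbourhoods U_0 = E, U_1, U_2, ... of 0 with
   U_(n+1) + U_(n+1) + U_(n+1) <= U_n, U_(n+1) inside the n-th ball of a countable
   base of tau* at 0, and U_(n+1) order closed when tau is Fatou.  The functional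
   p(x) = inf { sum_i 2^-k_i | x = sum_i x_i, x_i in U_(k_i) } is an F-norm with
   { p < 2^-n } <= U_n <= { p <= 2^-n }: a decomposition of weight below 2^-n splits
   at half its weight into two shorter pieces and one term, all three in U_(n+1).
   Hence the metric p(y - x) induces a linear topology with base (U_n) at 0, which is
   locally solid (Fatou) and lies between tau* and tau.  Lebesgue properties pass to
   every coarser locally solid topology. *)

From HB Require Import structures.
From mathcomp Require Import all_boot all_order all_algebra.
From mathcomp Require Import boolp classical_sets reals.
From mathcomp Require Import lra zify.
Import Order.TTheory GRing.Theory Num.Theory.
Set Implicit Arguments. Unset Strict Implicit. Unset Printing Implicit Defensive.
Local Open Scope ring_scope.

Section Dyadic.
Variable R : realType.

Lemma expN2_gt0 n : 0 < (2 : R) ^- n.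
Proof. by rewrite invr_gt0 exprn_gt0. Qed.

Lemma expN2S n : (2 : R) ^- n.+1 = 2 ^- n / 2.
Proof. by rewrite exprSr invfM. Qed.

Lemma ltr_expN2 m n : ((2 : R) ^- m < 2 ^- n) = (n < m)%N.
Proof. by rewrite ltf_pV2 ?posrE ?exprn_gt0 // ltr_eXn2l // ltr1n. Qed.

Lemma expN2_small (r : R) : 0 < r -> exists n, 2 ^- n < r.
Proof.
move=> r0; exists (Num.bound r^-1).
by rewrite invf_plt ?posrE ?exprn_gt0 // upper_nthrootP.
Qed.

Lemma expN2_ge_eq0 (a : R) : 0 <= a -> (forall n, a <= 2 ^- n) -> a = 0.
Proof.
move=> a0 ha; apply/eqP; rewrite eq_le a0 andbT leNgt; apply/negP => /expN2_small[n].
by rewrite ltNge ha.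
Qed.

End Dyadic.

Section Neighbourhoods.
Variables (R : realType) (E : lmodType R).
Implicit Types (tau sigma : (E -> Prop) -> Prop) (U V O : E -> Prop) (x : E).

Lemma nbhd_mono tau x U V : nbhd tau x U -> (forall z, U z -> V z) -> nbhd tau x V.
Proof. by move=> [O [oO [Ox OU]]] UV; exists O; split=> // ; split=> // z /OU/UV. Qed.

Lemma nbhd_mem tau x U : nbhd tau x U -> U x.
Proof. by move=> [O [_ [Ox OU]]]; apply: OU. Qed.

Lemma open_nbhd tau x O : tau O -> O x -> nbhd tau x O.
Proof. by move=> oO Ox; exists O. Qed.

Lemma nbhdI tau x U V : is_topology tau -> nbhd tau x U -> nbhd tau x V ->
  nbhd tau x (fun z => U z /\ V z).
Proof.
move=> [_ _ openI _] [O1 [o1 [x1 h1]]] [O2 [o2 [x2 h2]]].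
exists (fun z => O1 z /\ O2 z); split; first exact: openI.
by split=> // z [/h1 ? /h2 ?].
Qed.

Lemma nbhd_open tau O : is_topology tau -> (forall x, O x -> nbhd tau x O) -> tau O.
Proof.
move=> [_ _ _ openU] hO.
have -> : O = (fun x => exists S, (tau S /\ forall z, S z -> O z) /\ S x).
  apply/predeqP => x; split; first by move=> /hO [S [oS [Sx SO]]]; exists S.
  by move=> [S [[_ SO] /SO]].
by apply: openU => S [].
Qed.

Lemma nbhd_coarser sigma tau x U : coarser sigma tau -> nbhd sigma x U -> nbhd tau x U.
Proof. by move=> hco [O [oO OxU]]; exists O; split=> //; apply: hco. Qed.

Lemma nbhd0_translate tau x U : add_continuous tau -> nbhd tau 0 U ->
  nbhd tau x (fun y => U (y - x)).
Proof.
move=> hadd hU; have hU' : nbhd tau (x + - x) U by rewrite subrr.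
have [V [W [hV [hW hVW]]]] := hadd _ _ _ hU'.
by apply: nbhd_mono hV _ => y Vy; apply: hVW => //; apply: nbhd_mem hW.
Qed.

Lemma nbhd_translate0 tau x U : add_continuous tau -> nbhd tau x U ->
  nbhd tau 0 (fun z => U (x + z)).
Proof.
move=> hadd hU; have hU' : nbhd tau (x + 0) U by rewrite addr0.
have [V [W [hV [hW hVW]]]] := hadd _ _ _ hU'.
by apply: nbhd_mono hW _ => z Wz; apply: hVW => //; apply: nbhd_mem hV.
Qed.

Lemma nbhd0_add3 tau U : is_topology tau -> add_continuous tau -> nbhd tau 0 U ->
  exists V, nbhd tau 0 V /\ forall a b c, V a -> V b -> V c -> U (a + b + c).
Proof.
move=> htop hadd hU.
have half W : nbhd tau 0 W -> exists V, nbhd tau 0 V /\ forall a b, V a -> V b -> W (a + b).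
  move=> hW; have hW' : nbhd tau (0 + 0) W by rewrite addr0.
  have [V1 [V2 [hV1 [hV2 hV12]]]] := hadd _ _ _ hW'.
  exists (fun z => V1 z /\ V2 z); split; first exact: nbhdI.
  by move=> a b [? _] [_ ?]; apply: hV12.
have [V1 [hV1 V1U]] := half _ hU; have [V2 [hV2 V2V1]] := half _ hV1.
exists (fun z => V2 z /\ V1 z); split; first exact: nbhdI.
by move=> a b c [Va _] [Vb _] [_ Vc]; apply: V1U => //; apply: V2V1.
Qed.

Lemma coarser_nbhd0 sigma tau : is_topology tau ->
  add_continuous sigma -> add_continuous tau ->
  (forall V, nbhd sigma 0 V -> nbhd tau 0 V) -> coarser sigma tau.
Proof.
move=> htop hadds haddt h0 O oO; apply: nbhd_open => // x Ox.
have /h0 hx := nbhd_translate0 hadds (open_nbhd oO Ox).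
by apply: nbhd_mono (nbhd0_translate x haddt hx) _ => y; rewrite addrC subrK.
Qed.

Definition nbhd0_base tau (Q : (E -> Prop) -> Prop) : Prop :=
  forall U, nbhd tau 0 U -> exists V, nbhd tau 0 V /\ Q V /\ forall z, V z -> U z.

Lemma nbhd0_base_mono tau (Q Q' : (E -> Prop) -> Prop) :
  (forall V, Q V -> Q' V) -> nbhd0_base tau Q -> nbhd0_base tau Q'.
Proof. by move=> QQ' hQ U /hQ[V [hV [/QQ' ? ?]]]; exists V. Qed.

End Neighbourhoods.

Section MetricTopology.
Variables (R : realType) (E : lmodType R).
Implicit Types (d : E -> E -> R) (x y : E) (V : E -> Prop).

Definition is_metric d : Prop :=
  [/\ (forall x y, 0 <= d x y), (forall x y, d x y = 0 <-> x = y),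
      (forall x y, d x y = d y x) & (forall x y z, d x z <= d x y + d y z)].

Definition metric_topology d : (E -> Prop) -> Prop :=
  fun O => forall x, O x -> exists r : R, 0 < r /\ forall y, d x y < r -> O y.

Lemma metric_topologyP d : is_topology (metric_topology d).
Proof.
split.
- by move=> x _; exists 1; split.
- by move=> x [].
- move=> U V hU hV x [Ux Vx].
  have [r1 [r10 h1]] := hU x Ux; have [r2 [r20 h2]] := hV x Vx.
  exists (Num.min r1 r2); split; first by rewrite lt_min r10 r20.
  by move=> y; rewrite lt_min => /andP[/h1 ? /h2 ?].
- move=> F hF x [U [FU Ux]].
  have [r [r0 h]] := hF U FU x Ux; exists r; split=> // y /h Uy.
  by exists U.
Qed.

Lemma metrisable_metric_topology d : is_metric d -> metrisable (metric_topology d).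
Proof. by case=> d0 deq dsym dtri; exists d. Qed.

Section Metric.
Variable d : E -> E -> R.
Hypothesis dP : is_metric d.

Lemma nbhd_metricP x V :
  nbhd (metric_topology d) x V <-> exists2 r, 0 < r & forall y, d x y < r -> V y.
Proof.
have [_ deq _ dtri] := dP; split.
  by move=> [O [oO [Ox OV]]]; have [r [r0 hr]] := oO x Ox; exists r => // y /hr/OV.
move=> [r r0 hr]; exists (fun y => d x y < r); split; last first.
  by split=> //; have [_ ->] := deq x x.
move=> y dxy; exists (r - d x y); split; first by rewrite subr_gt0.
by move=> z dyz; have := dtri x y z; lra.
Qed.

Lemma metric_hausdorff : hausdorff (metric_topology d).
Proof.
have [d0 deq dsym dtri] := dP => x y xy.
have r0 : 0 < d x y by rewrite lt_neqAle d0 andbT eq_sym; apply/eqP => /deq.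
exists (fun z => d x z < d x y / 2), (fun z => d y z < d x y / 2).
split; first by apply/nbhd_metricP; exists (d x y / 2) => //; lra.
split; first by apply/nbhd_metricP; exists (d x y / 2) => //; lra.
by move=> z [h1 h2]; have := dtri x z y; rewrite (dsym z y); lra.
Qed.

End Metric.

Lemma metrisable_nbhd0_base (tau : (E -> Prop) -> Prop) : metrisable tau ->
  exists W : nat -> E -> Prop, (forall n, nbhd tau 0 (W n)) /\
    forall V, nbhd tau 0 V -> exists n, forall z, W n z -> V z.
Proof.
move=> [d [d0 deq dsym dtri htau]].
have dP : is_metric d by [].
have -> : tau = metric_topology d by apply/funext => O; apply/propext/htau.
exists (fun n z => d 0 z < 2 ^- n); split.
  by move=> n; apply/(nbhd_metricP dP); exists (2 ^- n) => //; apply: expN2_gt0.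
move=> V /(nbhd_metricP dP) [r r0 hr]; have [n hn] := expN2_small r0.
by exists n => z hz; apply: hr; lra.
Qed.

End MetricTopology.

Section VectorLattice.
Variables (R : realType) (E : lmodType R) (le : E -> E -> Prop) (sup : E -> E -> E).
Hypothesis hVL : is_vector_lattice le sup.

Lemma vl_trans x y z : le x y -> le y z -> le x z.
Proof. by case: hVL => _ [_ [h _]]; apply: h. Qed.

Lemma vl_addr x y z : le x y -> le (x + z) (y + z).
Proof. by case: hVL => _ [_ [_ [h _]]]; apply: h. Qed.

Lemma vl_scale (a : R) x y : 0 <= a -> le x y -> le (a *: x) (a *: y).
Proof. by case: hVL => _ [_ [_ [_ [h _]]]]; apply: h. Qed.

Lemma vl_sup_le x y z : le x z -> le y z -> le (sup x y) z.
Proof. by case: hVL => _ [_ [_ [_ [_ [h _]]]]]; have [_ [_]] := h x y; apply. Qed.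

Lemma vabs_ge x : le x (vabs sup x) /\ le (- x) (vabs sup x).
Proof. by case: hVL => _ [_ [_ [_ [_ [h _]]]]]; have [? [? _]] := h x (- x). Qed.

Lemma vabs_ge0 x : le 0 (vabs sup x).
Proof.
have [lex leNx] := vabs_ge x; set a := vabs sup x in lex leNx *.
have le0 : le 0 (a + a).
  have := vl_addr a leNx; rewrite addrC; apply: vl_trans.
  by have := vl_addr (- x) lex; rewrite subrr.
have := @vl_scale 2^-1 _ _ _ le0; rewrite scaler0 -mulr2n -scaler_nat scalerA.
by rewrite mulVf ?pnatr_eq0 // scale1r; apply; rewrite invr_ge0.
Qed.

Lemma vl_scale_le1 (c : R) y a : 0 <= c <= 1 -> le y a -> le 0 a -> le (c *: y) a.
Proof.
move=> /andP[c0 c1] ya a0; apply: (vl_trans (vl_scale c0 ya)).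
have : le 0 ((1 - c) *: a) by rewrite -(scaler0 _ (1 - c)); apply: vl_scale => //; lra.
by move=> /(vl_addr (c *: a)); rewrite add0r -scalerDl subrK scale1r.
Qed.

Lemma vabs_scale_le (b : R) x : `|b| <= 1 -> le (vabs sup (b *: x)) (vabs sup x).
Proof.
move=> hb; have [lex leNx] := vabs_ge x; have a0 := vabs_ge0 x.
have [s [les leNs ->]] : exists s, [/\ le s (vabs sup x), le (- s) (vabs sup x)
    & b *: x = `|b| *: s].
  have [b0|b0] := lerP 0 b; first by exists x; rewrite ger0_norm.
  by exists (- x); rewrite opprK ltr0_norm // scaleNr scalerN opprK.
have hb' : 0 <= `|b| <= 1 by rewrite normr_ge0.
by apply: vl_sup_le; rewrite -?scalerN; apply: vl_scale_le1.
Qed.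

Lemma solid_scale S x (b : R) : solid le sup S -> `|b| <= 1 -> S x -> S (b *: x).
Proof. by move=> hS hb Sx; apply: (hS _ x Sx); apply: vabs_scale_le. Qed.

End VectorLattice.

Section FNorm.
Variables (R : realType) (E : lmodType R) (U : nat -> E -> Prop).
Hypotheses (U0_total : forall z, U 0 z) (U_mem0 : forall n, U n 0)
  (U_add3 : forall n a b c, U n.+1 a -> U n.+1 b -> U n.+1 c -> U n (a + b + c))
  (U_balanced : forall n (b : R) z, `|b| <= 1 -> U n z -> U n (b *: z)).

Lemma U_decr n z : U n.+1 z -> U n z.
Proof. by move=> hz; have := U_add3 hz (U_mem0 _) (U_mem0 _); rewrite !addr0. Qed.

Lemma U_antimono m n z : (m <= n)%N -> U n z -> U m z.
Proof.
elim: n => [|n IH]; first by rewrite leqn0 => /eqP ->.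
by rewrite leq_eqVlt ltnS => /orP[/eqP -> //| mn /U_decr]; apply: IH.
Qed.

(* The list [:: (k_1, x_1); ...; (k_m, x_m)] encodes the decomposition
   x_1 + ... + x_m with x_i in U_(k_i), of weight 2^-k_1 + ... + 2^-k_m. *)
Definition admissible (l : seq (nat * E)) : Prop := forall q, q \in l -> U q.1 q.2.
Definition vsum (l : seq (nat * E)) : E := \sum_(q <- l) q.2.
Definition weight (l : seq (nat * E)) : R := \sum_(q <- l) 2 ^- q.1.

Lemma weight_cons q l : weight (q :: l) = 2 ^- q.1 + weight l.
Proof. exact: big_cons. Qed.

Lemma weight_cat l1 l2 : weight (l1 ++ l2) = weight l1 + weight l2.
Proof. exact: big_cat. Qed.

Lemma vsum_cons q l : vsum (q :: l) = q.2 + vsum l.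
Proof. exact: big_cons. Qed.

Lemma vsum_cat l1 l2 : vsum (l1 ++ l2) = vsum l1 + vsum l2.
Proof. exact: big_cat. Qed.

Lemma admissible_cat l1 l2 : admissible (l1 ++ l2) <-> admissible l1 /\ admissible l2.
Proof.
split=> [h|[h1 h2] q]; last by rewrite mem_cat => /orP[/h1|/h2].
by split=> q hq; apply: h; rewrite mem_cat hq ?orbT.
Qed.

Lemma weight_ge0 l : 0 <= weight l.
Proof. by apply: sumr_ge0 => q _; apply/ltW/expN2_gt0. Qed.

Lemma weight_split l (t : R) : 0 <= t < weight l ->
  exists l1 a l2, [/\ l = l1 ++ a :: l2, weight l1 <= t & t < weight l1 + 2 ^- a.1].
Proof.
elim: l t => [|q l IH] t; first by rewrite /weight big_nil; lra.
rewrite weight_cons => /andP[t0 ht].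
have [tq|qt] := ltrP t (2 ^- q.1).
  by exists [::], q, l; rewrite /weight big_nil add0r.
have [|l1 [a [l2 [-> h1 h2]]]] := IH (t - 2 ^- q.1); first by apply/andP; lra.
exists (q :: l1), a, l2; rewrite weight_cons.
by split=> //; lra.
Qed.

(* Splitting [l] at half its weight gives three pieces of weight below [2 ^- n.+1]. *)
Lemma admissible_vsum_mem l n : admissible l -> weight l < 2 ^- n -> U n (vsum l).
Proof.
have [k] := ubnP (size l); elim: k l n => // k IH l n.
case: l => [_ _ _|q l' szl hl hw]; first by rewrite /vsum big_nil.
set l := q :: l' in szl hl hw *.
have wl0 : 0 < weight l.
  by rewrite weight_cons ltr_pwDl ?expN2_gt0 ?weight_ge0.
have [|l1 [a [l2 [el h1 h2]]]] := weight_split (l := l) (t := weight l / 2); first by apply/andP; lra.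
have {h1 h2} [w1 wa w2] : [/\ weight l1 < 2 ^- n.+1, (n < a.1)%N & weight l2 < 2 ^- n.+1].
  have ew : weight l = weight l1 + 2 ^- a.1 + weight l2.
    by rewrite el weight_cat weight_cons addrA.
  have := weight_ge0 l1; have := weight_ge0 l2; rewrite expN2S -(ltr_expN2 R).
  by split; lra.
move: hl; rewrite el => /admissible_cat[hl1 hl2].
have [ha hl2'] : U a.1 a.2 /\ admissible l2.
  by split=> [|q' hq']; apply: hl2; rewrite inE ?hq' ?orbT ?eqxx.
have szl12 : (size l1 < k)%N /\ (size l2 < k)%N.
  by move: szl; rewrite el size_cat /=; split; lia.
rewrite vsum_cat vsum_cons addrA.
apply: U_add3; [apply: IH | apply: U_antimono ha | apply: IH]; by case: szl12.
Qed.

Local Open Scope classical_set_scope.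

Definition weights (x : E) : set R :=
  [set weight l | l in [set l | admissible l /\ vsum l = x]].

Definition fnorm (x : E) : R := inf (weights x).

Lemma admissible1 n x : U n x -> admissible [:: (n, x)].
Proof. by move=> hx q; rewrite inE => /eqP ->. Qed.

Lemma weights_neq0 x : weights x !=set0.
Proof.
exists (weight [:: (0%N, x)]), [:: (0%N, x)] => //.
by split; [apply: admissible1 | rewrite /vsum big_seq1].
Qed.

Lemma fnorm_le_weight l : admissible l -> fnorm (vsum l) <= weight l.
Proof.
move=> hl; apply: ge_inf; last by exists l.
by exists 0 => _ [l' _ <-]; apply: weight_ge0.
Qed.

Lemma fnorm_ge x (c : R) :
  (forall l, admissible l -> vsum l = x -> c <= weight l) -> c <= fnorm x.
Proof.
move=> hc; apply: lb_le_inf (weights_neq0 x) _.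
by move=> _ [l [hl hx] <-]; apply: hc.
Qed.

Lemma fnorm_lt x (c : R) :
  fnorm x < c -> exists l, [/\ admissible l, vsum l = x & weight l < c].
Proof.
by move=> /(inf_lt (weights_neq0 x))[_ [l [hl hx] <-] hw]; exists l.
Qed.

Lemma fnorm_ge0 x : 0 <= fnorm x.
Proof. by apply: fnorm_ge => l _ _; apply: weight_ge0. Qed.

Lemma fnorm_lt_mem n x : fnorm x < 2 ^- n -> U n x.
Proof. by move=> /fnorm_lt[l [hl <- hw]]; apply: admissible_vsum_mem. Qed.

Lemma mem_fnorm_le n x : U n x -> fnorm x <= 2 ^- n.
Proof. by move=> /admissible1/fnorm_le_weight; rewrite /vsum /weight !big_seq1. Qed.

Lemma fnorm0 : fnorm 0 = 0.
Proof. by apply: expN2_ge_eq0 (fnorm_ge0 0) _ => n; apply/mem_fnorm_le/U_mem0. Qed.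

Lemma fnormD x y : fnorm (x + y) <= fnorm x + fnorm y.
Proof.
rewrite -lerBlDr; apply: fnorm_ge => lx hlx <-.
rewrite lerBlDl -lerBlDr; apply: fnorm_ge => ly hly <-.
rewrite lerBlDl -weight_cat -vsum_cat; apply: fnorm_le_weight.
exact/admissible_cat.
Qed.

Lemma fnormZ_le1 (b : R) x : `|b| <= 1 -> fnorm (b *: x) <= fnorm x.
Proof.
move=> hb; apply: fnorm_ge => l hl <-.
pose lb := [seq (q.1, b *: q.2) | q <- l].
have -> : weight l = weight lb by rewrite /weight big_map.
have -> : b *: vsum l = vsum lb by rewrite /vsum big_map scaler_sumr.
apply: fnorm_le_weight => _ /mapP[q hq ->] /=.
exact/U_balanced/hl.
Qed.

Lemma fnormN x : fnorm (- x) = fnorm x.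
Proof.
have le_fnormN z : fnorm (- z) <= fnorm z.
  by rewrite -scaleN1r; apply: fnormZ_le1; rewrite normrN normr1.
by apply/eqP; rewrite eq_le le_fnormN -{1}(opprK x) le_fnormN.
Qed.

Lemma fnormMn x N : fnorm (x *+ N) <= fnorm x *+ N.
Proof.
elim: N => [|N IH]; first by rewrite !mulr0n fnorm0.
by rewrite !mulrS; apply: le_trans (fnormD _ _) _; rewrite lerD2l.
Qed.

Lemma fnormZ_nat (a : R) N x : `|a| <= N%:R -> fnorm (a *: x) <= fnorm x *+ N.
Proof.
case: N => [|N] ha.
  by move: ha; rewrite normr_le0 => /eqP ->; rewrite scale0r fnorm0.
have -> : a *: x = ((a / N.+1%:R) *: x) *+ N.+1.
  by rewrite scalerMnl -mulr_natr mulfVK // pnatr_eq0.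
apply/(le_trans (fnormMn _ _))/ler_wMn2r/fnormZ_le1.
by rewrite normrM normfV normr_nat ler_pdivrMr // mul1r.
Qed.

Definition fdist (x y : E) : R := fnorm (y - x).

Hypothesis U_sep : forall x, (forall n, U n x) -> x = 0.

Lemma fnorm_eq0 x : fnorm x = 0 -> x = 0.
Proof. by move=> px; apply: U_sep => n; apply: fnorm_lt_mem; rewrite px expN2_gt0. Qed.

Lemma fdist_metric : is_metric fdist.
Proof.
split=> [x y|x y|x y|x y z]; rewrite /fdist.
- exact: fnorm_ge0.
- by split=> [/fnorm_eq0/eqP|->]; rewrite ?subrr ?fnorm0 // subr_eq0 eq_sym => /eqP.
- by rewrite -opprB fnormN.
- by rewrite -[z - x](subrKA y) addrC fnormD.
Qed.

Lemma nbhd0_fdistP V :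
  nbhd (metric_topology fdist) 0 V <-> exists n, forall z, U n z -> V z.
Proof.
rewrite nbhd_metricP; last exact: fdist_metric.
split=> [[r r0 hr]|[n hn]].
  have [n hn] := expN2_small r0; exists n => z /mem_fnorm_le hz.
  by apply: hr; rewrite /fdist subr0; lra.
exists (2 ^- n); first exact: expN2_gt0.
by move=> z; rewrite /fdist subr0 => /fnorm_lt_mem/hn.
Qed.

Lemma fdist_add_continuous : add_continuous (metric_topology fdist).
Proof.
have dP := fdist_metric.
move=> x0 y0 V /(nbhd_metricP dP)[r r0 hr].
exists (fun x => fdist x0 x < r / 2), (fun y => fdist y0 y < r / 2).
split; first by apply/(nbhd_metricP dP); exists (r / 2) => //; lra.
split; first by apply/(nbhd_metricP dP); exists (r / 2) => //; lra.
move=> x y hx hy; apply: hr; rewrite /fdist opprD addrACA.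
by apply: le_lt_trans (fnormD _ _) _; rewrite /fdist in hx hy; lra.
Qed.

Hypothesis U_absorb : forall n x, exists2 e : R, 0 < e & forall a, `|a| < e -> U n (a *: x).

Lemma fdist_scale_continuous : scale_continuous (metric_topology fdist).
Proof.
have dP := fdist_metric.
move=> a0 x0 V /(nbhd_metricP dP)[r r0 hr].
have [m hm] := expN2_small (divr_gt0 r0 (ltr0Sn R 2)).
have [e e0 he] := U_absorb m x0.
pose N := Num.bound `|a0|.
have hN : `|a0| <= N%:R by apply/ltW/archi_boundP.
pose del := r / 3%:R / (N%:R + 1).
have del0 : 0 < del by rewrite !divr_gt0 // ltr_wpDl.
exists (Num.min e 1), (fun x => fdist x0 x < del).
split; first by rewrite lt_min e0 ltr01.
split; first by apply/(nbhd_metricP dP); exists del.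
move=> a x; rewrite lt_min => /andP[hae ha1]; rewrite /fdist => hx.
apply: hr; rewrite /fdist.
have -> : a *: x - a0 *: x0 = (a - a0) *: (x - x0) + (a - a0) *: x0 + a0 *: (x - x0).
  by rewrite -scalerDr subrK scalerBl scalerBr addrA subrK.
have h1 : fnorm ((a - a0) *: (x - x0)) <= fnorm (x - x0) by apply/fnormZ_le1/ltW.
have h2 : fnorm ((a - a0) *: x0) <= 2 ^- m by apply/mem_fnorm_le/he.
have h3 : fnorm (a0 *: (x - x0)) <= fnorm (x - x0) * N%:R.
  by rewrite mulr_natr; apply: fnormZ_nat.
have h4 : fnorm (x - x0) * (N%:R + 1) < r / 3%:R by rewrite -ltr_pdivlMr ?ltr_wpDl.
apply: le_lt_trans (fnormD _ _) _; apply: le_lt_trans (lerD (fnormD _ _) (lexx _)) _.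
rewrite mulrDr mulr1 in h4; lra.
Qed.

Lemma fdist_linear : linear_topology (metric_topology fdist).
Proof.
split; [exact: metric_topologyP | exact/metric_hausdorff/fdist_metric |
        exact: fdist_add_continuous | exact: fdist_scale_continuous].
Qed.

End FNorm.

Section NbhdChain.
Variables (R : realType) (E : lmodType R) (tau : (E -> Prop) -> Prop).
Variables (Q : (E -> Prop) -> Prop) (W : nat -> E -> Prop).
Hypotheses (tau_top : is_topology tau) (tau_add : add_continuous tau)
  (hQ : nbhd0_base tau Q) (hW : forall n, nbhd tau 0 (W n)).

Definition chain_step (V : E -> Prop) (n : nat) (V' : E -> Prop) : Prop :=
  [/\ Q V', (forall z, V' z -> W n z)
    & forall a b c, V' a -> V' b -> V' c -> V (a + b + c)].

Lemma nbhd0_step V n : nbhd tau 0 V -> exists V', nbhd tau 0 V' /\ chain_step V n V'.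
Proof.
move=> hV; have [T [hT T3]] := nbhd0_add3 tau_top tau_add hV.
have [V' [hV' [QV' V'TW]]] := hQ (nbhdI tau_top hT (hW n)).
exists V'; split=> //; split=> // [z /V'TW[]//|a b c /V'TW[Ta _] /V'TW[Tb _] /V'TW[Tc _]].
exact: T3.
Qed.

Lemma nbhd0_chain : exists U : nat -> E -> Prop,
  [/\ (forall z, U 0 z), (forall n, nbhd tau 0 (U n)), (forall n, Q (U n.+1)),
      (forall n z, U n.+1 z -> W n z)
    & forall n a b c, U n.+1 a -> U n.+1 b -> U n.+1 c -> U n (a + b + c)].
Proof.
pose N := {V : E -> Prop | nbhd tau 0 V}.
have /choice[next hnext] : forall Vn : N * nat,
    exists V' : N, chain_step (sval Vn.1) Vn.2 (sval V').
  by move=> [[V hV] n]; have [V' [hV' ?]] := nbhd0_step n hV; exists (exist _ V' hV').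
have hT : nbhd tau 0 (fun _ => True) by apply: open_nbhd => //; case: tau_top.
pose fix u n : N := if n is m.+1 then next (u m, m) else exist _ _ hT.
exists (fun n => sval (u n)); split=> [//|n|n|n|n]; first exact: svalP.
all: by have [] := hnext (u n, n).
Qed.

End NbhdChain.

Section ChainTopology.
Variables (R : realType) (E : lmodType R) (le : E -> E -> Prop) (sup : E -> E -> E).
Variables (tau taus : (E -> Prop) -> Prop) (Q : (E -> Prop) -> Prop).
Variables (W U : nat -> E -> Prop).
Hypotheses (hVL : is_vector_lattice le sup) (tau_lin : linear_topology tau)
  (taus_lin : linear_topology taus) (Qsolid : forall V, Q V -> solid le sup V)
  (hWbase : forall V, nbhd taus 0 V -> exists n, forall z, W n z -> V z).
Hypotheses (U0_total : forall z, U 0 z) (hU : forall n, nbhd tau 0 (U n))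
  (QU : forall n, Q (U n.+1)) (UW : forall n z, U n.+1 z -> W n z)
  (U_add3 : forall n a b c, U n.+1 a -> U n.+1 b -> U n.+1 c -> U n (a + b + c)).

Lemma chain_mem0 n : U n 0.
Proof. exact: nbhd_mem (hU n). Qed.

Lemma chain_balanced n (b : R) z : `|b| <= 1 -> U n z -> U n (b *: z).
Proof.
case: n => [_ _|n hb hz]; first exact: U0_total.
by have := solid_scale hVL (Qsolid (QU n)) hb hz.
Qed.

Lemma chain_sep x : (forall n, U n x) -> x = 0.
Proof.
move=> hx; have [//|/eqP x0] := eqVneq x 0.
have [_ hsep _ _] := taus_lin.
have [A [B [hA [/hWbase[n WB] AB]]]] := hsep x 0 x0.
by case: (AB x); split; [apply: nbhd_mem hA | apply/WB/UW].
Qed.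

Lemma chain_absorb n x : exists2 e : R, 0 < e & forall a, `|a| < e -> U n (a *: x).
Proof.
have [_ _ _ hscale] := tau_lin.
have hUx : nbhd tau (0 *: x) (U n) by rewrite scale0r.
have [e [V [e0 [hV heV]]]] := hscale _ _ _ hUx.
by exists e => // a ha; apply: heV; [rewrite subr0 | apply: nbhd_mem hV].
Qed.

Let tt := metric_topology (fdist U).

Lemma chain_topology_linear : linear_topology tt.
Proof.
exact: fdist_linear U0_total chain_mem0 U_add3 chain_balanced chain_sep chain_absorb.
Qed.

Lemma nbhd0_chain_topologyP V : nbhd tt 0 V <-> exists n, forall z, U n z -> V z.
Proof. exact: (nbhd0_fdistP U0_total chain_mem0 U_add3 chain_balanced chain_sep V). Qed.

Lemma chain_topology_coarser : coarser tt tau.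
Proof.
have [ttT _ tt_add _] := chain_topology_linear; have [tauT _ tau_add _] := tau_lin.
apply: coarser_nbhd0 => // V /nbhd0_chain_topologyP[n hn].
exact: nbhd_mono (hU n) hn.
Qed.

Lemma coarser_chain_topology : coarser taus tt.
Proof.
have [ttT _ tt_add _] := chain_topology_linear; have [_ _ taus_add _] := taus_lin.
apply: coarser_nbhd0 => // V /hWbase[n hn]; apply/nbhd0_chain_topologyP.
by exists n.+1 => z /UW/hn.
Qed.

Lemma chain_topology_base : nbhd0_base tt Q.
Proof.
move=> V /nbhd0_chain_topologyP[n hn]; exists (U n.+1); split.
  by apply/nbhd0_chain_topologyP; exists n.+1.
by split=> // z /(U_decr chain_mem0 U_add3)/hn.
Qed.

Lemma chain_topology_between :
  [/\ linear_topology tt, metrisable tt, coarser tt tau, coarser taus tt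
    & nbhd0_base tt Q].
Proof.
split; [exact: chain_topology_linear | | exact: chain_topology_coarser |
        exact: coarser_chain_topology | exact: chain_topology_base].
exact/metrisable_metric_topology/(fdist_metric U0_total chain_mem0 U_add3 chain_balanced chain_sep).
Qed.

End ChainTopology.

Lemma exists_metrisable_between (R : realType) (E : lmodType R)
    (le : E -> E -> Prop) (sup : E -> E -> E) (tau taus Q : (E -> Prop) -> Prop) :
  is_vector_lattice le sup ->
  linear_topology tau -> nbhd0_base tau Q -> (forall V, Q V -> solid le sup V) ->
  linear_topology taus -> metrisable taus -> coarser taus tau ->
  exists tt, [/\ linear_topology tt, metrisable tt, coarser tt tau, coarser taus tt
               & nbhd0_base tt Q].
Proof.
move=> hVL tau_lin hQ Qsolid taus_lin /metrisable_nbhd0_base[W [hW hWbase]] hco.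
have [tauT _ tau_add _] := tau_lin.
have hWtau n : nbhd tau 0 (W n) by apply: nbhd_coarser hco (hW n).
have [U [U0_total hU QU UW U_add3]] := nbhd0_chain tauT tau_add hQ hWtau.
exists (metric_topology (fdist U)).
exact: chain_topology_between hVL tau_lin taus_lin Qsolid hWbase U0_total hU QU UW U_add3.
Qed.

Section Lebesgue.
Variables (R : realType) (E : lmodType R) (le : E -> E -> Prop) (sup : E -> E -> E).
Variables (sigma tau : (E -> Prop) -> Prop).
Hypotheses (sigma_solid : locally_solid le sup sigma) (hco : coarser sigma tau).

Lemma tconv_coarser (I : Type) (leI : I -> I -> Prop) (x : I -> E) (x0 : E) :
  tconv tau leI x x0 -> tconv sigma leI x x0.
Proof. by move=> hx U /(nbhd_coarser hco); apply: hx. Qed.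

Lemma o_lebesgue_coarser : o_lebesgue le sup tau -> o_lebesgue le sup sigma.
Proof. by move=> [_ hx]; split=> // I leI x x0 hI /hx-/(_ hI)/tconv_coarser. Qed.

Lemma uo_lebesgue_coarser : uo_lebesgue le sup tau -> uo_lebesgue le sup sigma.
Proof. by move=> [_ hx]; split=> // I leI x x0 hI /hx-/(_ hI)/tconv_coarser. Qed.

End Lebesgue.

Unset Implicit Arguments.
Local Close Scope ring_scope.

Theorem proposition3p4 (R : realType) (E : lmodType R)
  (le : E -> E -> Prop) (sup : E -> E -> E)
  (hVL : is_vector_lattice le sup)
  (tau : (E -> Prop) -> Prop) (htau : locally_solid le sup tau)
  (taus : (E -> Prop) -> Prop) (hlin : linear_topology taus)
  (hmet : metrisable taus) (hcoarse : coarser taus tau) :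
  (exists tt : (E -> Prop) -> Prop,
      [/\ locally_solid le sup tt, metrisable tt, coarser tt tau & coarser taus tt])
  /\ (forall tt : (E -> Prop) -> Prop,
        locally_solid le sup tt -> metrisable tt -> coarser tt tau -> coarser taus tt ->
        (o_lebesgue le sup tau -> o_lebesgue le sup tt) /\
        (uo_lebesgue le sup tau -> uo_lebesgue le sup tt))
  /\ (fatou le sup tau ->
      exists tt : (E -> Prop) -> Prop,
        [/\ locally_solid le sup tt, metrisable tt, coarser tt tau, coarser taus tt
          & fatou le sup tt]).
Proof.
have [tau_lin tau_solid] := htau.
have between Q hQ Qsolid :=
  @exists_metrisable_between _ _ _ _ _ _ Q hVL tau_lin hQ Qsolid hlin hmet hcoarse.
split; [|split].
- have [tt [tt_lin ? ? ? tt_solid]] := between _ tau_solid (fun _ => id).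
  by exists tt.
- move=> tt tt_solid _ hco _.
  by split; [apply: o_lebesgue_coarser | apply: uo_lebesgue_coarser].
- move=> [_ tau_fatou].
  pose Q V := solid le sup V /\ order_closed le sup V.
  have hQ : nbhd0_base tau Q by move=> U /tau_fatou[V [? [? [? ?]]]]; exists V.
  have [tt [tt_lin ? ? ? ttQ]] := between Q hQ (fun _ => @proj1 _ _).
  have tt_solid : locally_solid le sup tt by split=> //; apply: nbhd0_base_mono ttQ => V [].
  exists tt; split=> //; split=> // U /ttQ[V [? [[? ?] ?]]].
  by exists V.
Qed.
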